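(* Let $\mathcal P\subset\nabla$ be a family of parameters. Suppose that for every $k\ge0$ the maximum $\max\{f(k;\lambda,\boldsymbol p):(\lambda,\boldsymbol p)\in\mathcal P\}$ is attained, and is attained (only) on $\mathcal P\cap\mathcal M_k$, where $\mathcal M_k=\{(\lambda,\boldsymbol p)\in\nabla:\lambda+\sum_ip_i=k\}$. Then the family $\mathcal P$ is cross modal.
   Context: $\nabla=\{(\lambda,\boldsymbol p):\lambda\ge0,\ 1\ge p_1\ge p_2\ge\dots\ge0,\ \sum_ip_i<\infty\}$. For $(\lambda,\boldsymbol p)\in\nabla$, $f(k;\lambda,\boldsymbol p)$ is the probability that $X+\sum_iB_i=k$ where $X\sim\mathrm{Poisson}(\lambda)$, $B_i\sim\mathrm{Bernoulli}(p_i)$ are independent. A mode of $f(\cdot;\lambda,\boldsymbol p)$ is any $k$ at which it attains its maximum. The family $\mathcal P$ is cross modal if for every $k\ge0$ the likelihood $(\lambda,\boldsymbol p)\mapsto f(k;\lambda,\boldsymbol p)$ attains its maximum over $\mathcal P$, and for every maximiser $(\lambda,\boldsymbol p)$, $k$ is a mode of $f(\cdot;\lambda,\boldsymbol p)$. *)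

From Stdlib Require Import Reals Lra Lia.
From Coquelicot Require Import Coquelicot.
Open Scope R_scope.

(* A parameter (lambda, p) ; p is indexed from 0 (p 0 = p_1 of the paper). *)
Definition param := (R * (nat -> R))%type.

Definition in_nabla (th : param) : Prop :=
  let (lam, p) := th in
  0 <= lam /\ p 0%nat <= 1 /\ (forall i, p (S i) <= p i) /\
  (forall i, 0 <= p i) /\ ex_series p.

Definition poisson_pmf (lam : R) (m : nat) : R :=
  exp (- lam) * lam ^ m / INR (Factorial.fact m).

(* Law of B_0 + ... + B_{n-1}, B_i ~ Bernoulli(p i) independent
   (Poisson-binomial law), via the convolution recursion. *)
Fixpoint pbinom_pmf (p : nat -> R) (n j : nat) : R :=
  match n with
  | O => match j with O => 1 | S _ => 0 end
  | S n' => (1 - p n') * pbinom_pmf p n' j +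
            match j with O => 0 | S j' => p n' * pbinom_pmf p n' j' end
  end.

(* Law of X + B_0 + ... + B_{n-1}, X ~ Poisson(lam) independent. *)
Definition fin_pmf (lam : R) (p : nat -> R) (n k : nat) : R :=
  sum_f_R0 (fun j => poisson_pmf lam (k - j) * pbinom_pmf p n j) k.

(* f(k; lam, p) = P(X + sum_i B_i = k), as the limit of the finite sums
   (the infinite sum converges a.s. since sum_i p_i < oo). *)
Definition f (k : nat) (th : param) : R :=
  real (Lim_seq (fun n => fin_pmf (fst th) (snd th) n k)).

Definition is_mode (th : param) (k : nat) : Prop :=
  forall j : nat, f j th <= f k th.

Definition is_maximiser (PP : param -> Prop) (k : nat) (th : param) : Prop :=
  PP th /\ forall th', PP th' -> f k th' <= f k th.

Definition M (k : nat) (th : param) : Prop :=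
  in_nabla th /\ fst th + Series (snd th) = INR k.

Definition cross_modal (PP : param -> Prop) : Prop :=
  forall k : nat,
    (exists th, is_maximiser PP k th) /\
    (forall th, is_maximiser PP k th -> is_mode th k).

(* Let q be the law of X + B_1 + ... + B_n with finitely many summands and mean mu.  The Stein
   identity  j q(j) = lam q(j-1) + sum_i p_i q_i(j-1),  where q_i omits B_i, combined with the
   log-concavity of q (a Polya frequency sequence of order 2), shows by induction on n that q
   increases up to mu and decreases from mu on; so an integer mean k is a mode (Darroch's rule).
   For infinitely many summands, moving the tail mass sum_(i >= n) p_i into the Poisson parameter
   keeps the mean equal to k, and these laws converge pointwise to f(.; lam, p).  A maximiser for k
   lies in M_k, i.e. has mean k. *)

From Stdlib Require Import Reals Lra Lia List Permutation FunctionalExtensionality.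
From Coquelicot Require Import Coquelicot.
(* Imported last, so that [f] is the likelihood of Defs and not the field of Stdlib's [family]. *)
From Pilot Require Import Defs.
Import ListNotations.
Open Scope R_scope.

Definition sumR (s : list R) : R := fold_right Rplus 0 s.

Lemma sumR_map_plus {A} (f g : A -> R) s :
  sumR (map (fun x => f x + g x) s) = sumR (map f s) + sumR (map g s).
Proof. induction s as [|x s IH]; simpl; [ring|]. rewrite IH. ring. Qed.

Lemma sumR_map_scal {A} c (f : A -> R) s :
  sumR (map (fun x => c * f x) s) = c * sumR (map f s).
Proof. induction s as [|x s IH]; simpl; [ring|]. rewrite IH. ring. Qed.

Lemma sumR_map_le {A} (f g : A -> R) s :
  (forall x, In x s -> f x <= g x) -> sumR (map f s) <= sumR (map g s).
Proof.
  induction s as [|x s IH]; intros H; simpl; [lra|].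
  apply Rplus_le_compat; [apply H; now left|]. apply IH. intros y Hy. apply H. now right.
Qed.

Lemma sumR_nonneg s : List.Forall (fun x => 0 <= x) s -> 0 <= sumR s.
Proof. induction 1; simpl; lra. Qed.

Lemma sumR_map_ge_term {A} (f : A -> R) s x :
  (forall y, In y s -> 0 <= f y) -> In x s -> f x <= sumR (map f s).
Proof.
  induction s as [|y s IH]; intros Hpos Hx; simpl in *; [contradiction|].
  assert (0 <= sumR (map f s)).
  { apply sumR_nonneg, List.Forall_forall. intros z Hz.
    apply in_map_iff in Hz as [w [<- Hw]]. apply Hpos. now right. }
  destruct Hx as [->|Hx].
  - pose proof (Hpos x (or_introl eq_refl)). lra.
  - pose proof (IH (fun z Hz => Hpos z (or_intror Hz)) Hx).
    pose proof (Hpos y (or_introl eq_refl)). lra.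
Qed.

Lemma sumR_perm s s' : Permutation s s' -> sumR s = sumR s'.
Proof. induction 1; simpl; lra. Qed.

Fixpoint picks {A} (l : list A) : list (A * list A) :=
  match l with
  | [] => []
  | a :: l' => (a, l') :: map (fun br => (fst br, a :: snd br)) (picks l')
  end.

Lemma picks_perm {A} (l : list A) b r : In (b, r) (picks l) -> Permutation l (b :: r).
Proof.
  revert b r; induction l as [|a l IH]; intros b r H; simpl in H; [contradiction|].
  destruct H as [H|H]; [injection H as -> ->; reflexivity|].
  apply in_map_iff in H as [[b' r'] [E H]]. injection E as -> <-.
  rewrite (IH _ _ H). apply perm_swap.
Qed.

Lemma picks_length {A} (l : list A) b r : In (b, r) (picks l) -> length l = S (length r).
Proof. intros H. exact (Permutation_length (picks_perm l b r H)). Qed.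

Lemma sumR_map_fst_picks l : sumR (map fst (picks l)) = sumR l.
Proof.
  induction l as [|a l IH]; simpl; [reflexivity|]. rewrite map_map. simpl. f_equal. exact IH.
Qed.

Lemma picks_ind {A} (P : list A -> Prop) :
  (forall l, (forall b r, In (b, r) (picks l) -> P r) -> P l) -> forall l, P l.
Proof.
  intros H l. remember (length l) as n eqn:E. revert l E.
  induction n as [n IH] using Wf_nat.lt_wf_ind. intros l ->.
  apply H. intros b r Hbr. apply (IH (length r)); [|reflexivity].
  rewrite (picks_length l b r Hbr). lia.
Qed.

Definition lag (q : nat -> R) (j : nat) : R :=
  match j with O => 0 | S i => q i end.

Definition bern_conv (p : R) (q : nat -> R) (j : nat) : R := (1 - p) * q j + p * lag q j.

Lemma lag_bern_conv p q j : lag (bern_conv p q) j = bern_conv p (lag q) j.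
Proof. destruct j; unfold bern_conv; simpl; ring. Qed.

Lemma bern_conv_comm a b q : bern_conv a (bern_conv b q) = bern_conv b (bern_conv a q).
Proof.
  extensionality j. unfold bern_conv at 1 3. rewrite !lag_bern_conv. unfold bern_conv. ring.
Qed.

Definition law (lam : R) (ps : list R) : nat -> R := fold_right bern_conv (poisson_pmf lam) ps.

Definition probs (ps : list R) : Prop := List.Forall (fun p => 0 <= p <= 1) ps.

Lemma law_perm lam l l' : Permutation l l' -> law lam l = law lam l'.
Proof.
  unfold law. induction 1; simpl.
  - reflexivity.
  - congruence.
  - apply bern_conv_comm.
  - congruence.
Qed.

Section Picks.

Variables (lam b : R) (l r : list R).
Hypothesis Hbr : In (b, r) (picks l).

Lemma picks_law : law lam l = bern_conv b (law lam r).
Proof. exact (law_perm lam _ _ (picks_perm l b r Hbr)). Qed.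

Lemma picks_sumR : sumR l = b + sumR r.
Proof. exact (sumR_perm _ _ (picks_perm l b r Hbr)). Qed.

Lemma picks_probs : probs l -> 0 <= b <= 1 /\ probs r.
Proof.
  intros Hl. unfold probs in Hl. rewrite (picks_perm l b r Hbr) in Hl.
  now inversion Hl.
Qed.

End Picks.

Lemma poisson_pmf_nonneg lam m : 0 <= lam -> 0 <= poisson_pmf lam m.
Proof.
  intros H. unfold poisson_pmf. apply Rmult_le_pos; [apply Rmult_le_pos|].
  - left; apply exp_pos.
  - now apply pow_le.
  - left; apply Rinv_0_lt_compat, INR_fact_lt_0.
Qed.

Lemma poisson_pmf_succ lam m : INR (S m) * poisson_pmf lam (S m) = lam * poisson_pmf lam m.
Proof.
  unfold poisson_pmf. rewrite fact_simpl, mult_INR. simpl pow.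
  field. split; [apply INR_fact_neq_0 | apply not_0_INR; lia].
Qed.

Lemma law_stein lam l j :
  INR j * law lam l j =
  lam * lag (law lam l) j + sumR (map (fun br => fst br * lag (law lam (snd br)) j) (picks l)).
Proof.
  revert j; induction l as [|a l IH]; intros j; simpl picks.
  - destruct j; simpl lag; [simpl; ring|]. unfold law; simpl fold_right.
    rewrite poisson_pmf_succ. simpl. ring.
  - assert (IH' : forall i, sumR (map (fun br => fst br * lag (law lam (snd br)) i) (picks l)) =
                            INR i * law lam l i - lam * lag (law lam l) i).
    { intros i. rewrite IH. ring. }
    assert (E : forall br : R * list R, fst br * lag (law lam (a :: snd br)) j =
                (1 - a) * (fst br * lag (law lam (snd br)) j)
                + a * (fst br * lag (lag (law lam (snd br))) j)).
    { intros br. change (law lam (a :: snd br)) with (bern_conv a (law lam (snd br))).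
      rewrite lag_bern_conv. unfold bern_conv. ring. }
    rewrite map_cons, map_map. cbn [fst snd sumR fold_right]. fold sumR.
    rewrite (map_ext _ _ E), sumR_map_plus, !sumR_map_scal, IH'.
    change (law lam (a :: l)) with (bern_conv a (law lam l)).
    rewrite lag_bern_conv. unfold bern_conv.
    destruct j as [|j]; simpl lag.
    + rewrite (map_ext _ (fun br => 0 * fst br)) by (intros; ring).
      rewrite sumR_map_scal. simpl. ring.
    + rewrite IH', S_INR. ring.
Qed.

Lemma law_stein_centered lam l j :
  sumR (map (fun br => fst br * (law lam l j - lag (law lam (snd br)) j)) (picks l)) =
  (lam + sumR l - INR j) * law lam l j - lam * (law lam l j - lag (law lam l) j).
Proof.
  rewrite (map_ext _ (fun br => law lam l j * fst br + -1 * (fst br * lag (law lam (snd br)) j)))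
    by (intros; ring).
  rewrite sumR_map_plus, !sumR_map_scal.
  change (fun br : R * list R => fst br) with (@fst R (list R)).
  rewrite sumR_map_fst_picks. pose proof (law_stein lam l j). lra.
Qed.

Definition PF2 (q : nat -> R) : Prop :=
  (forall j, 0 <= q j) /\ forall a b, (a <= b)%nat -> lag q a * q (S b) <= q a * q b.

Lemma lag_nonneg q j : (forall i, 0 <= q i) -> 0 <= lag q j.
Proof. intros H. destruct j; simpl; [lra | apply H]. Qed.

Lemma PF2_poisson lam : 0 <= lam -> PF2 (poisson_pmf lam).
Proof.
  intros Hlam. split; [intros; now apply poisson_pmf_nonneg|].
  intros [|a] b Hab; simpl lag.
  - rewrite Rmult_0_l. apply Rmult_le_pos; now apply poisson_pmf_nonneg.
  - set (P := poisson_pmf lam).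
    assert (Ha : 0 < INR (S a)) by (apply lt_0_INR; lia).
    assert (Hb : INR (S a) <= INR (S b)) by (apply le_INR; lia).
    assert (0 <= lam * P a * P b).
    { unfold P. apply Rmult_le_pos; [apply Rmult_le_pos|]; auto using poisson_pmf_nonneg. }
    apply (Rmult_le_reg_l (INR (S a) * INR (S b))); [nra|].
    replace (INR (S a) * INR (S b) * (P a * P (S b)))
      with (INR (S a) * P a * (INR (S b) * P (S b))) by ring.
    replace (INR (S a) * INR (S b) * (P (S a) * P b))
      with (INR (S b) * P b * (INR (S a) * P (S a))) by ring.
    unfold P. rewrite !poisson_pmf_succ. fold P. nra.
Qed.

Lemma PF2_lag q : PF2 q -> PF2 (lag q).
Proof.
  intros [Hq HPF]. split; [intros; now apply lag_nonneg|].
  intros [|a] [|b] Hab; simpl lag; [lra | lra | lia | apply HPF; lia].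
Qed.

Lemma bern_conv_nonneg p q j : 0 <= p <= 1 -> (forall i, 0 <= q i) -> 0 <= bern_conv p q j.
Proof.
  intros Hp Hq. unfold bern_conv. pose proof (Hq j). pose proof (lag_nonneg q j Hq). nra.
Qed.

Lemma PF2_bern_conv p q : 0 <= p <= 1 -> PF2 q -> PF2 (bern_conv p q).
Proof.
  intros Hp Hq. pose proof (PF2_lag q Hq) as [HLq HPFL]. destruct Hq as [Hq HPF].
  split; [intros; now apply bern_conv_nonneg|].
  intros a b Hab. rewrite lag_bern_conv. unfold bern_conv. simpl lag.
  assert (X1 : lag q a * q (S b) <= q a * q b) by now apply HPF.
  assert (X2 : lag (lag q) a * q b <= lag q a * lag q b) by exact (HPFL a b Hab).
  (* PF2 with a gap of two, by chaining two PF2 inequalities *)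
  assert (X3 : lag (lag q) a * q (S b) <= q a * lag q b).
  { apply (Rle_trans _ (lag q a * q b)); [exact (HPFL a (S b) ltac:(lia))|].
    destruct (Nat.eq_dec a b) as [->|Hne]; [lra|].
    destruct b as [|b]; [lia|]. simpl lag. apply HPF. lia. }
  assert (E : ((1 - p) * q a + p * lag q a) * ((1 - p) * q b + p * lag q b)
              - ((1 - p) * lag q a + p * lag (lag q) a) * ((1 - p) * q (S b) + p * q b)
              = (1 - p) * (1 - p) * (q a * q b - lag q a * q (S b))
                + p * p * (lag q a * lag q b - lag (lag q) a * q b)
                + p * (1 - p) * (q a * lag q b - lag (lag q) a * q (S b))) by ring.
  assert (0 <= (1 - p) * (1 - p) * (q a * q b - lag q a * q (S b))) by (apply Rmult_le_pos; nra).
  assert (0 <= p * p * (lag q a * lag q b - lag (lag q) a * q b)) by (apply Rmult_le_pos; nra).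
  assert (0 <= p * (1 - p) * (q a * lag q b - lag (lag q) a * q (S b)))
    by (apply Rmult_le_pos; nra).
  lra.
Qed.

Lemma PF2_law lam l : 0 <= lam -> probs l -> PF2 (law lam l).
Proof.
  intros Hlam Hl. induction Hl as [|p l Hp _ IH]; simpl.
  - now apply PF2_poisson.
  - now apply PF2_bern_conv.
Qed.

Lemma law_ascent_to_mean lam : 0 <= lam ->
  forall l j, probs l -> INR j <= lam + sumR l -> lag (law lam l) j <= law lam l j.
Proof.
  intros Hlam l. induction l as [l IH] using picks_ind. intros j Hl Hj.
  pose proof (PF2_law lam l Hlam Hl) as [Hq _].
  destruct j as [|j]; simpl lag; [apply Hq|].
  set (q := law lam l) in *.
  assert (Hterm : forall b r, In (b, r) (picks l) -> q j <= law lam r j).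
  { intros b r Hbr. destruct (picks_probs b l r Hbr Hl) as [Hb Hr].
    assert (Hr_mean : INR j <= lam + sumR r).
    { rewrite (picks_sumR b l r Hbr), S_INR in Hj. lra. }
    pose proof (IH b r Hbr j Hr Hr_mean).
    unfold q. rewrite (picks_law lam b l r Hbr). unfold bern_conv. nra. }
  assert (Hsum : sumR (map (fun br => fst br * (q (S j) - law lam (snd br) j)) (picks l))
                 <= sumR l * (q (S j) - q j)).
  { rewrite <- (sumR_map_fst_picks l), Rmult_comm, <- sumR_map_scal.
    apply sumR_map_le. intros [b r] Hbr. simpl.
    destruct (picks_probs b l r Hbr Hl) as [Hb _]. pose proof (Hterm b r Hbr). nra. }
  pose proof (law_stein_centered lam l (S j)) as E. simpl lag in E. fold q in E.
  rewrite E in Hsum.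
  pose proof (Hq (S j)). pose proof (pos_INR j). rewrite S_INR in *.
  nra.
Qed.

Lemma law_rise_above_mean_all_certain lam l j : 0 <= lam -> probs l -> lam + sumR l <= INR j ->
  (forall b r, In (b, r) (picks l) -> law lam r (S j) <= law lam r j) ->
  law lam l j < law lam l (S j) -> forall b r, In (b, r) (picks l) -> b = 1.
Proof.
  intros Hlam Hl Hj Hpicks Hup.
  pose proof (PF2_law lam l Hlam Hl) as [Hq HPF].
  set (q := law lam l) in *.
  assert (Hlag : lag q j <= q j).
  { pose proof (HPF j j (le_n j)). pose proof (Hq j). nra. }
  assert (Hterm : forall b r, In (b, r) (picks l) ->
                  0 <= b <= 1 /\ (1 - b) * (q (S j) - q j) <= b * (q j - lag (law lam r) j)).
  { intros b r Hbr. destruct (picks_probs b l r Hbr Hl) as [Hb Hr]. split; [exact Hb|].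
    pose proof (Hpicks b r Hbr).
    unfold q. rewrite (picks_law lam b l r Hbr). unfold bern_conv. simpl lag.
    assert (0 <= (1 - b) * (1 - b) * (law lam r j - law lam r (S j))).
    { apply Rmult_le_pos; nra. }
    nra. }
  assert (Hsum : sumR (map (fun br => fst br * (q j - lag (law lam (snd br)) j)) (picks l)) <= 0).
  { pose proof (law_stein_centered lam l j) as E. fold q in E. rewrite E.
    pose proof (Hq j). nra. }
  intros b r Hbr.
  assert (Hnonneg : forall br, In br (picks l) -> 0 <= fst br * (q j - lag (law lam (snd br)) j)).
  { intros [b' r'] Hbr'. destruct (Hterm b' r' Hbr'). simpl. nra. }
  pose proof (sumR_map_ge_term _ _ _ Hnonneg Hbr). simpl in *.
  destruct (Hterm b r Hbr). nra.
Qed.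

Lemma law_descent_from_mean lam : 0 <= lam ->
  forall l j, probs l -> lam + sumR l <= INR j -> law lam l (S j) <= law lam l j.
Proof.
  intros Hlam l. induction l as [l IH] using picks_ind. intros j Hl Hj.
  destruct (Rle_lt_dec (law lam l (S j)) (law lam l j)) as [Hdown|Hup]; [exact Hdown|exfalso].
  assert (Hpicks : forall b r, In (b, r) (picks l) -> law lam r (S j) <= law lam r j).
  { intros b r Hbr. destruct (picks_probs b l r Hbr Hl) as [Hb Hr].
    apply (IH b r Hbr j Hr). rewrite (picks_sumR b l r Hbr) in Hj. lra. }
  pose proof (law_rise_above_mean_all_certain lam l j Hlam Hl Hj Hpicks Hup) as Hone.
  destruct l as [|a l'].
  - pose proof (law_stein lam [] (S j)) as E. simpl lag in E.
    change (sumR (map _ (picks []))) with 0 in E. change (sumR []) with 0 in Hj.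
    pose proof (poisson_pmf_nonneg lam j Hlam). pose proof (pos_INR j).
    change (law lam []) with (poisson_pmf lam) in E, Hup. rewrite S_INR in E. nra.
  - assert (Ha : In (a, l') (picks (a :: l'))) by now left.
    pose proof (Hone a l' Ha) as ->.
    destruct (picks_probs 1 (1 :: l') l' Ha Hl) as [_ Hl'].
    change (sumR (1 :: l')) with (1 + sumR l') in Hj.
    pose proof (sumR_nonneg l' (List.Forall_impl _ (fun p Hp => proj1 Hp) Hl')).
    destruct j as [|i]; [change (INR 0) with 0 in Hj; lra|].
    assert (Hl'_mean : lam + sumR l' <= INR i) by (rewrite S_INR in Hj; lra).
    pose proof (IH 1 l' Ha i Hl' Hl'_mean).
    change (law lam (1 :: l')) with (bern_conv 1 (law lam l')) in Hup.
    unfold bern_conv in Hup. simpl lag in Hup. lra.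
Qed.

Lemma unimodal_max (q : nat -> R) k :
  (forall j, (j < k)%nat -> q j <= q (S j)) -> (forall j, (k <= j)%nat -> q (S j) <= q j) ->
  forall j, q j <= q k.
Proof.
  intros Hup Hdown j. destruct (Nat.le_gt_cases k j) as [Hkj|Hjk].
  - replace j with (k + (j - k))%nat by lia. induction (j - k)%nat as [|d IH].
    + rewrite Nat.add_0_r. lra.
    + rewrite Nat.add_succ_r. eapply Rle_trans; [apply Hdown; lia | exact IH].
  - replace j with (k - (k - j))%nat by lia. assert (Hd : (k - j <= k)%nat) by lia.
    induction (k - j)%nat as [|d IH].
    + rewrite Nat.sub_0_r. lra.
    + replace (k - d)%nat with (S (k - S d)) in IH by lia.
      eapply Rle_trans; [apply Hup; lia | apply IH; lia].
Qed.

Lemma law_mode lam l k : 0 <= lam -> probs l -> lam + sumR l = INR k ->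
  forall j, law lam l j <= law lam l k.
Proof.
  intros Hlam Hl Hk. apply unimodal_max; intros j Hj.
  - apply (law_ascent_to_mean lam Hlam l (S j) Hl). rewrite Hk. apply le_INR. lia.
  - apply (law_descent_from_mean lam Hlam l j Hl). rewrite Hk. apply le_INR. lia.
Qed.

Definition conv (a b : nat -> R) (k : nat) : R := sum_f_R0 (fun j => a (k - j)%nat * b j) k.

Lemma conv_lag a b : conv a (lag b) = lag (conv a b).
Proof.
  extensionality k. unfold conv. destruct k as [|k]; simpl lag; [simpl; ring|].
  rewrite decomp_sum by lia. simpl pred. simpl lag. rewrite Rmult_0_r, Rplus_0_l. reflexivity.
Qed.

Lemma conv_bern_conv a b p : conv a (bern_conv p b) = bern_conv p (conv a b).
Proof.
  extensionality k.
  change (bern_conv p (conv a b) k) with ((1 - p) * conv a b k + p * lag (conv a b) k).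
  rewrite <- conv_lag. unfold conv, bern_conv.
  rewrite 2!scal_sum, <- plus_sum. apply sum_eq. intros; ring.
Qed.

Lemma conv_pbinom_pmf0 a p : conv a (pbinom_pmf p 0) = a.
Proof.
  extensionality k. unfold conv. destruct k as [|k]; [simpl; ring|].
  rewrite decomp_sum, sum_eq_R0 by (intros; simpl; lia || ring). simpl. ring.
Qed.

Lemma pbinom_pmf_succ p n : pbinom_pmf p (S n) = bern_conv (p n) (pbinom_pmf p n).
Proof. extensionality j. unfold bern_conv. destruct j; simpl; ring. Qed.

Fixpoint firsts (p : nat -> R) (n : nat) : list R :=
  match n with O => [] | S n' => p n' :: firsts p n' end.

Lemma fin_pmf_law lam p n : fin_pmf lam p n = law lam (firsts p n).
Proof.
  change (fin_pmf lam p n) with (conv (poisson_pmf lam) (pbinom_pmf p n)).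
  induction n as [|n IH].
  - apply conv_pbinom_pmf0.
  - rewrite pbinom_pmf_succ, conv_bern_conv, IH. reflexivity.
Qed.

Lemma probs_firsts p n : (forall i, 0 <= p i <= 1) -> probs (firsts p n).
Proof. intros Hp. induction n; constructor; auto. Qed.

Lemma sumR_firsts_succ p n : sumR (firsts p (S n)) = sum_f_R0 p n.
Proof.
  induction n as [|n IH]; [simpl; ring|].
  change (sumR (firsts p (S (S n)))) with (p (S n) + sumR (firsts p (S n))).
  rewrite IH. simpl. ring.
Qed.

Lemma sumR_firsts_cvg p : ex_series p -> is_lim_seq (fun n => sumR (firsts p n)) (Series p).
Proof.
  intros Hp. apply is_lim_seq_incr_1, (is_lim_seq_ext (sum_n p)); [|exact (Series_correct p Hp)].
  intros n. now rewrite sumR_firsts_succ, sum_n_Reals.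
Qed.

Lemma sumR_firsts_le_Series p n : (forall i, 0 <= p i) -> ex_series p ->
  sumR (firsts p n) <= Series p.
Proof.
  intros Hpos Hp. apply (is_lim_seq_incr_compare _ _ (sumR_firsts_cvg p Hp)).
  intros m. simpl. pose proof (Hpos m). lra.
Qed.

Lemma pbinom_pmf_bounds p : (forall i, 0 <= p i <= 1) -> forall n j, 0 <= pbinom_pmf p n j <= 1.
Proof.
  intros Hp n. induction n as [|n IH]; intros j; [destruct j; simpl; lra|].
  rewrite pbinom_pmf_succ. unfold bern_conv. pose proof (Hp n). pose proof (IH j).
  assert (0 <= lag (pbinom_pmf p n) j <= 1) by (destruct j; simpl; [lra | apply IH]).
  nra.
Qed.

Lemma pbinom_pmf_cvg p j : (forall i, 0 <= p i <= 1) -> ex_series p ->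
  ex_finite_lim_seq (fun n => pbinom_pmf p n j).
Proof.
  intros Hp Hser.
  (* [pbinom_pmf p n j] moves by at most [p n] at step [n], so adding the partial sums
     of [p] makes it monotone *)
  set (u n := pbinom_pmf p n j + sumR (firsts p n)).
  assert (Hu : forall n, u n <= u (S n)).
  { intros n. unfold u. rewrite pbinom_pmf_succ. unfold bern_conv.
    change (sumR (firsts p (S n))) with (p n + sumR (firsts p n)).
    pose proof (Hp n). pose proof (pbinom_pmf_bounds p Hp n j).
    assert (0 <= lag (pbinom_pmf p n) j) by (apply lag_nonneg; intros; apply pbinom_pmf_bounds, Hp).
    nra. }
  assert (Hbound : forall n, u n <= 1 + Series p).
  { intros n. unfold u. pose proof (pbinom_pmf_bounds p Hp n j).
    pose proof (sumR_firsts_le_Series p n (fun i => proj1 (Hp i)) Hser). lra. }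
  destruct (ex_finite_lim_seq_incr u _ Hu Hbound) as [L HL].
  exists (L - Series p). apply (is_lim_seq_ext (fun n => u n - sumR (firsts p n))).
  - intros n. unfold u. ring.
  - exact (is_lim_seq_minus' _ _ _ _ HL (sumR_firsts_cvg p Hser)).
Qed.

Lemma is_lim_seq_sum_f_R0 (u : nat -> nat -> R) (U : nat -> R) N :
  (forall j, is_lim_seq (fun n => u n j) (U j)) ->
  is_lim_seq (fun n => sum_f_R0 (u n) N) (sum_f_R0 U N).
Proof.
  intros H. induction N as [|N IH]; simpl; [apply H|].
  exact (is_lim_seq_plus' _ _ _ _ IH (H (S N))).
Qed.

Lemma poisson_pmf_cvg t (lam : R) m : is_lim_seq t lam ->
  is_lim_seq (fun n => poisson_pmf (t n) m) (poisson_pmf lam m).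
Proof.
  apply (is_lim_seq_continuous (fun x => poisson_pmf x m)). unfold poisson_pmf. reg.
Qed.

Lemma fin_pmf_cvg (lam : R) p t m : (forall i, 0 <= p i <= 1) -> ex_series p -> is_lim_seq t lam ->
  is_lim_seq (fun n => fin_pmf (t n) p n m) (f m (lam, p)).
Proof.
  intros Hp Hser Ht.
  set (L j := real (Lim_seq (fun n => pbinom_pmf p n j))).
  assert (Hcvg : forall t, is_lim_seq t lam ->
            is_lim_seq (fun n => fin_pmf (t n) p n m) (conv (poisson_pmf lam) L m)).
  { intros t' Ht'. unfold fin_pmf, conv.
    apply (is_lim_seq_sum_f_R0 (fun n j => poisson_pmf (t' n) (m - j) * pbinom_pmf p n j)).
    intros j. apply is_lim_seq_mult'; [now apply poisson_pmf_cvg|].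
    now apply Lim_seq_correct', pbinom_pmf_cvg. }
  replace (f m (lam, p)) with (conv (poisson_pmf lam) L m); [now apply Hcvg|].
  unfold f. simpl. now rewrite (is_lim_seq_unique _ _ (Hcvg _ (is_lim_seq_const lam))).
Qed.

Lemma in_nabla_probs lam p : in_nabla (lam, p) -> forall i, 0 <= p i <= 1.
Proof.
  intros (_ & Hp0 & Hdec & Hpos & _) i. split; [apply Hpos|].
  induction i as [|i IH]; [exact Hp0|]. specialize (Hdec i). lra.
Qed.

Lemma mode_at_integer_mean lam p k : in_nabla (lam, p) -> lam + Series p = INR k ->
  is_mode (lam, p) k.
Proof.
  intros Hnabla Hk j. pose proof (in_nabla_probs lam p Hnabla) as Hp.
  destruct Hnabla as (Hlam & _ & _ & Hpos & Hser).
  (* move the tail mass of [p] beyond [n] into the Poisson part, so that the mean stays [k] *)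
  set (t n := lam + (Series p - sumR (firsts p n))).
  assert (Ht : is_lim_seq t lam).
  { replace (Finite lam) with (Rbar_plus lam (Rbar_minus (Series p) (Series p)))
      by (simpl; f_equal; ring).
    apply is_lim_seq_plus'; [apply is_lim_seq_const|].
    apply is_lim_seq_minus'; [apply is_lim_seq_const | now apply sumR_firsts_cvg]. }
  assert (Hle : forall n, fin_pmf (t n) p n j <= fin_pmf (t n) p n k).
  { intros n. rewrite !fin_pmf_law. apply law_mode.
    - pose proof (sumR_firsts_le_Series p n Hpos Hser). unfold t. lra.
    - now apply probs_firsts.
    - unfold t. rewrite <- Hk. ring. }
  exact (is_lim_seq_le _ _ _ _ Hle (fin_pmf_cvg lam p t j Hp Hser Ht)
                                   (fin_pmf_cvg lam p t k Hp Hser Ht)).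
Qed.

Theorem proposition2 (PP : param -> Prop) :
  (forall th, PP th -> in_nabla th) ->
  (forall k : nat,
     (exists th, is_maximiser PP k th) /\
     (forall th, is_maximiser PP k th -> M k th)) ->
  cross_modal PP.
Proof.
  (* membership in [M k] already includes [in_nabla] *)
  intros _ HM k. destruct (HM k) as [Hex Hmax]. split; [exact Hex|].
  intros [lam p] Hth. destruct (Hmax _ Hth) as [Hnabla Hmean].
  exact (mode_at_integer_mean lam p k Hnabla Hmean).
Qed.
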